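(* Let $d,n\ge1$ and $M=\begin{bmatrix} I_n & 0\\ 0& 0\end{bmatrix}\in\mathbb{R}^{(n+1)\times(n+1)}$. Let $A_0,A_1,\dots$ and $B_0,B_1,\dots$ be matrices in $\mathbb{R}^{d\times d}$ with each $A_i$ symmetric. Given $X_0\in\mathbb{R}^{d\times(n+1)}$ and $Y_0\in\mathbb{R}^{1\times(n+1)}$, define for $i\ge0$ $$X_{i+1}=X_i+\tfrac1nB_iX_iMX_i^\top A_iX_i,\qquad Y_{i+1}=Y_i+\tfrac1nY_iMX_i^\top A_iX_i.$$ Let $c\in\mathbb{R}$, $C=[0,0,\dots,0,c]\in\mathbb{R}^{1\times(n+1)}$, and let $X_i',Y_i'$ be defined by the same recursion started from $X_0'=X_0$, $Y_0'=Y_0+C$. Then for every $i\ge0$, $X_i'=X_i$ and $Y_i'=Y_i+C$. In particular, $X_i$ and the entries $[Y_i]_j$ for $j\neq n+1$ do not depend on $[Y_0]_{n+1}$, and $[Y_i]_{n+1}$ depends additively on $[Y_0]_{n+1}$. *)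

From mathcomp Require Import all_boot all_order all_algebra.
Set Implicit Arguments. Unset Strict Implicit. Unset Printing Implicit Defensive.
Import GRing.Theory Num.Theory.
Local Open Scope ring_scope.

Definition Mmat (R : ringType) (n : nat) : 'M[R]_n.+1 :=
  \matrix_(i < n.+1, j < n.+1) ((i == j) && (i < n)%N)%:R.

Definition Crow (R : ringType) (n : nat) (c : R) : 'rV[R]_n.+1 :=
  \row_(j < n.+1) (if j == ord_max then c else 0).

Definition step (R : fieldType) (d n : nat) (A B : 'M[R]_d)
  (XY : 'M[R]_(d, n.+1) * 'rV[R]_n.+1) : 'M[R]_(d, n.+1) * 'rV[R]_n.+1 :=
  let X := XY.1 in let Y := XY.2 in
  (X + n%:R^-1 *: (B *m X *m Mmat R n *m X^T *m A *m X),
   Y + n%:R^-1 *: (Y *m Mmat R n *m X^T *m A *m X)).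

Fixpoint iterXY (R : fieldType) (d n : nat) (A B : nat -> 'M[R]_d)
  (X0 : 'M[R]_(d, n.+1)) (Y0 : 'rV[R]_n.+1) (i : nat)
  : 'M[R]_(d, n.+1) * 'rV[R]_n.+1 :=
  match i with
  | 0 => (X0, Y0)
  | i'.+1 => step (A i') (B i') (iterXY A B X0 Y0 i')
  end.

From mathcomp Require Import all_boot all_order all_algebra.
Import GRing.Theory Num.Theory.
Local Open Scope ring_scope.

(* The update of X does not involve Y, and Y enters its own update only through
   Y M.  A row C with C M = 0 is therefore invisible to the recursion: adding it
   to Y_0 just carries it along.  The last coordinate row [0, ..., 0, c] is such
   a row, since the last row of M vanishes. *)

Lemma Crow_mulmx_Mmat (R : ringType) (n : nat) (c : R) : Crow n c *m Mmat R n = 0.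
Proof.
apply/rowP => j; rewrite !mxE; apply: big1 => k _; rewrite !mxE.
by case: eqP => [->|_]; rewrite /= ?ltnn ?andbF ?mulr0 ?mul0r.
Qed.

Section ShiftInKernel.

Variables (R : fieldType) (d n : nat) (C : 'rV[R]_n.+1).
Hypothesis CM0 : C *m Mmat R n = 0.

Lemma step_shift (A B : 'M[R]_d) (X : 'M[R]_(d, n.+1)) (Y : 'rV[R]_n.+1) :
  step A B (X, Y + C) = ((step A B (X, Y)).1, (step A B (X, Y)).2 + C).
Proof. by rewrite /step /= mulmxDl CM0 addr0 addrAC. Qed.

Lemma iterXY_shift (A B : nat -> 'M[R]_d) (X0 : 'M[R]_(d, n.+1))
    (Y0 : 'rV[R]_n.+1) (i : nat) :
  iterXY A B X0 (Y0 + C) i =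
    ((iterXY A B X0 Y0 i).1, (iterXY A B X0 Y0 i).2 + C).
Proof.
elim: i => [|i /= ->] //.
by case: (iterXY A B X0 Y0 i) => X Y; rewrite step_shift.
Qed.

End ShiftInKernel.

Theorem lemma6 (R : realFieldType) (d n : nat) (hd : (1 <= d)%N) (hn : (1 <= n)%N)
  (A B : nat -> 'M[R]_d) (hA : forall i, (A i)^T = A i)
  (X0 : 'M[R]_(d, n.+1)) (Y0 : 'rV[R]_n.+1) (c : R) :
  forall i : nat,
    (iterXY A B X0 (Y0 + Crow n c) i).1 = (iterXY A B X0 Y0 i).1 /\
    (iterXY A B X0 (Y0 + Crow n c) i).2 = (iterXY A B X0 Y0 i).2 + Crow n c.
Proof. by move=> i; rewrite iterXY_shift ?Crow_mulmx_Mmat. Qed.
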